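(* For any atomic proposition $p$, the rules $\mathsf{acl}_p$: from $\Gamma,p,p\Rightarrow\Delta$ infer $\Gamma,p\Rightarrow\Delta$, and $\mathsf{acr}_p$: from $\Gamma\Rightarrow p,p,\Delta$ infer $\Gamma\Rightarrow p,\Delta$ (with $\Gamma,\Delta$ arbitrary finite multisets of formulas) are strongly admissible in $\mathsf{Grz}_\infty+\mathsf{cut}$.
   Context: Formulas are built from $\bot$ and atoms by $\to$ and $\Box$; sequents $\Gamma\Rightarrow\Delta$ have finite multisets of formulas on each side; $\Box\Pi$ denotes $\{\Box B:B\in\Pi\}$. The calculus $\mathsf{Grz}_\infty+\mathsf{cut}$ has initial sequents $\Gamma,p\Rightarrow p,\Delta$ ($p$ atomic), $\Gamma,\bot\Rightarrow\Delta$, and rules $(\to_L)$ from $\Gamma,B\Rightarrow\Delta$ and $\Gamma\Rightarrow A,\Delta$ infer $\Gamma,A\to B\Rightarrow\Delta$; $(\to_R)$ from $\Gamma,A\Rightarrow B,\Delta$ infer $\Gamma\Rightarrow A\to B,\Delta$; $(\mathsf{refl})$ from $\Gamma,B,\Box B\Rightarrow\Delta$ infer $\Gamma,\Box B\Rightarrow\Delta$; $(\Box)$ from left premise $\Gamma,\Box\Pi\Rightarrow A,\Delta$ and right premise $\Box\Pi\Rightarrow A$ infer $\Gamma,\Box\Pi\Rightarrow\Box A,\Delta$; $(\mathsf{cut})$ from $\Gamma\Rightarrow A,\Delta$ and $\Gamma,A\Rightarrow\Delta$ infer $\Gamma\Rightarrow\Delta$. An $\infty$-proof is a possibly infinite tree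 of sequents built by these rules with leaves labelled by initial sequents, in which every infinite branch passes through a right premise of $(\Box)$ infinitely often; $\mathcal P$ is the set of all $\infty$-proofs. The $n$-fragment of an $\infty$-proof is the finite tree obtained by cutting every branch at the $n$-th (from the root) right premise of $(\Box)$; the main fragment is the $1$-fragment; the local height $|\pi|$ is the length of the longest branch of the main fragment (an $\infty$-proof consisting only of an initial sequent has height $0$). Write $\pi\sim_n\tau$ if the $n$-fragments of $\pi,\tau$ coincide, and $\pi\sim_0\tau$ always. $\mathcal P_n$ is the set of $\infty$-proofs with no application of $(\mathsf{cut})$ in their $n$-fragment, and $\mathcal P_0=\mathcal P$. A single-premise rule is strongly admissible in $\mathsf{Grz}_\infty+\mathsf{cut}$ if there is a mapping $\mathsf u:\mathcal P\to\mathcal P$ such that: (i) $\mathsf u$ is non-expansive: $\pi\sim_n\pi'$ implies $\mathsf u(\pi)\sim_n\mathsf u(\pi')$ for all $n$; (ii) $\mathsf u$ is adequate: $\pi\in\mathcal P_n$ implies $\mathsf u(\pi)\in\mathcal P_n$ for all $n$; (iii) $|\mathsf u(\pi)|\le|\pi|$ for all $\pi\in\mathcal P$; (iv) for every instance of the rule, $\mathsf u$ maps every $\infty$-proof of its premise to an $\infty$-proof of its conclusion. *)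

From HB Require Import structures.
From mathcomp Require Import all_boot.
From mathcomp Require Import finmap multiset.

Set Implicit Arguments.
Unset Strict Implicit.
Unset Printing Implicit Defensive.

Inductive formula : Type :=
| Bot : formula
| Atom : nat -> formula
| Imp : formula -> formula -> formula
| Box : formula -> formula.

Fixpoint formula_enc (A : formula) : GenTree.tree nat :=
  match A with
  | Bot => GenTree.Node 0 [::]
  | Atom n => GenTree.Leaf n
  | Imp B C => GenTree.Node 1 [:: formula_enc B; formula_enc C]
  | Box B => GenTree.Node 2 [:: formula_enc B]
  end.

Fixpoint formula_dec (t : GenTree.tree nat) : option formula :=
  match t with
  | GenTree.Leaf n => Some (Atom n)
  | GenTree.Node 0 [::] => Some Bot
  | GenTree.Node 1 [:: t1; t2] =>
      match formula_dec t1, formula_dec t2 with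
      | Some B, Some C => Some (Imp B C)
      | _, _ => None
      end
  | GenTree.Node 2 [:: t1] =>
      match formula_dec t1 with Some B => Some (Box B) | None => None end
  | _ => None
  end.

Lemma formula_encK : pcancel formula_enc formula_dec.
Proof. by elim=> [|n|B IHB C IHC|B IHB] //=; rewrite ?IHB ?IHC. Qed.

HB.instance Definition _ := Countable.copy formula (pcan_type formula_encK).

Local Open Scope mset_scope.

Definition sequent := ({mset formula} * {mset formula})%type.

Definition boxes (Pi : seq formula) : {mset formula} := seq_mset (map Box Pi).

Definition initial (s : sequent) : Prop :=
  (exists (p : nat) (G D : {mset formula}), s = (Atom p +` G, Atom p +` D)) \/
  (exists (G D : {mset formula}), s = (Bot +` G, D)).

Definition impR_inst (prem concl : sequent) : Prop :=
  exists G D A B, prem = (A +` G, B +` D) /\ concl = (G, Imp A B +` D).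
Definition refl_inst (prem concl : sequent) : Prop :=
  exists G D B, prem = (B +` (Box B +` G), D) /\ concl = (Box B +` G, D).

Definition impL_inst (prem1 prem2 concl : sequent) : Prop :=
  exists G D A B, prem1 = (B +` G, D) /\ prem2 = (G, A +` D)
                  /\ concl = (Imp A B +` G, D).
Definition box_inst (prem1 prem2 concl : sequent) : Prop :=
  exists G D (Pi : seq formula) A,
    prem1 = (G `+` boxes Pi, A +` D) /\ prem2 = (boxes Pi, [mset A])
    /\ concl = (G `+` boxes Pi, Box A +` D).
Definition cut_inst (prem1 prem2 concl : sequent) : Prop :=
  exists G D A, prem1 = (G, A +` D) /\ prem2 = (A +` G, D) /\ concl = (G, D).

(* ---------- Trees of sequents ----------
   A (possibly infinite) finitely branching tree is a partial map from
   addresses (sequences of child indices, read from the root) to sequents. *)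
Definition ptree := seq nat -> option sequent.

Definition defined (t : ptree) (p : seq nat) : Prop := t p <> None.

Definition node_ok (t : ptree) (p : seq nat) (s : sequent) : Prop :=
  (initial s /\ forall i, t (rcons p i) = None) \/
  (exists s0, t (rcons p 0) = Some s0 /\ (forall i, 0 < i -> t (rcons p i) = None)
              /\ (impR_inst s0 s \/ refl_inst s0 s)) \/
  (exists s0 s1, t (rcons p 0) = Some s0 /\ t (rcons p 1) = Some s1
              /\ (forall i, 1 < i -> t (rcons p i) = None)
              /\ (impL_inst s0 s1 s \/ box_inst s0 s1 s \/ cut_inst s0 s1 s)).

Definition box_node (t : ptree) (p : seq nat) : Prop :=
  exists s s0 s1, t p = Some s /\ t (rcons p 0) = Some s0 /\ t (rcons p 1) = Some s1
                  /\ box_inst s0 s1 s.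

Definition cut_node (t : ptree) (p : seq nat) : Prop :=
  exists s s0 s1, t p = Some s /\ t (rcons p 0) = Some s0 /\ t (rcons p 1) = Some s1
                  /\ cut_inst s0 s1 s.

Definition right_box_premise (t : ptree) (q : seq nat) (i : nat) : Prop :=
  i = 1 /\ box_node t q.

Definition inf_branch (t : ptree) (b : nat -> nat) : Prop :=
  forall k, defined t (mkseq b k).

Definition is_proof (t : ptree) : Prop :=
  defined t [::] /\
  (forall p i, defined t (rcons p i) -> defined t p) /\
  (forall p s, t p = Some s -> node_ok t p s) /\
  (forall b, inf_branch t b ->
     forall N, exists k, N <= k /\ right_box_premise t (mkseq b k) (b k)).

Record proof := Proof { ptree_of : ptree; proofP : is_proof ptree_of }.

Definition root (pi : proof) : option sequent := ptree_of pi [::].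

Inductive rbp_count (t : ptree) : seq nat -> nat -> Prop :=
| rbp_nil : rbp_count t [::] 0
| rbp_yes p i m : rbp_count t p m -> right_box_premise t p i ->
                  rbp_count t (rcons p i) m.+1
| rbp_no p i m : rbp_count t p m -> ~ right_box_premise t p i ->
                 rbp_count t (rcons p i) m.

Definition frag_inner (n : nat) (t : ptree) (p : seq nat) : Prop :=
  exists m, rbp_count t p m /\ m < n.

(* p is an address of the n-fragment: the root, or a child of an inner node
   (so the n-th right premises of (Box) are leaves of the fragment) *)
Definition in_frag (n : nat) (t : ptree) (p : seq nat) : Prop :=
  p = [::] \/ exists q i, p = rcons q i /\ frag_inner n t q.

Definition sim (n : nat) (pi tau : proof) : Prop :=
  n = 0 \/
  ((forall p, in_frag n (ptree_of pi) p -> ptree_of pi p = ptree_of tau p) /\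
   (forall p, in_frag n (ptree_of tau) p -> ptree_of pi p = ptree_of tau p)).

Definition P_ (n : nat) (pi : proof) : Prop :=
  forall p, frag_inner n (ptree_of pi) p -> ~ cut_node (ptree_of pi) p.

Definition height_le (pi : proof) (h : nat) : Prop :=
  forall p, defined (ptree_of pi) p -> in_frag 1 (ptree_of pi) p -> size p <= h.

Definition height_nonincr (u : proof -> proof) : Prop :=
  forall pi h, height_le pi h -> height_le (u pi) h.

Definition rule1 := sequent -> sequent -> Prop.

Definition strongly_admissible (R : rule1) : Prop :=
  exists u : proof -> proof,
    (forall n pi pi', sim n pi pi' -> sim n (u pi) (u pi')) /\
    (forall n pi, P_ n pi -> P_ n (u pi)) /\
    height_nonincr u /\
    (forall prem concl, R prem concl ->
       forall pi : proof, root pi = Some prem -> root (u pi) = Some concl).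

Definition acl (p : nat) : rule1 := fun prem concl =>
  exists G D : {mset formula},
    prem = (Atom p +` (Atom p +` G), D) /\ concl = (Atom p +` G, D).

Definition acr (p : nat) : rule1 := fun prem concl =>
  exists G D : {mset formula},
    prem = (G, Atom p +` (Atom p +` D)) /\ concl = (G, Atom p +` D).

(* Given an ∞-proof whose root has at least two copies of p on the relevant
   side, delete one copy of p from every sequent of the main fragment and keep
   the rest of the tree (above the right premises of (Box)) unchanged; on all
   other ∞-proofs the map is the identity.  Inside the main fragment every
   rule passes the side formulas of its conclusion on to its premises, so the
   multiplicity of p never drops below 2 there: initial sequents stay initial
   and each application of a rule remains an application of the same rule.
   Since rules are told apart only by the shape of their sequents, one checks
   that no (Box) or (cut) node is created or destroyed; hence every
   n-fragment keeps its shape, which gives non-expansiveness, preservation of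
   cut-freeness of n-fragments and the bound on the local height. *)

From Pilot Require Import Defs.
From mathcomp Require Import all_boot.
From mathcomp Require Import finmap multiset.
From mathcomp Require Import zify.
From Stdlib Require Import ClassicalEpsilon.

Set Implicit Arguments.
Unset Strict Implicit.
Unset Printing Implicit Defensive.
Local Open Scope mset_scope.

Lemma msetDB1 (K : choiceType) (A B : {mset K}) a :
  a \notin A \/ a \in B -> (A `+` B) `\ a = A `+` (B `\ a).
Proof.
move=> aAB; apply/msetP=> b; rewrite msetB1E msetE2 msetE2 msetB1E.
case: (eqVneq b a) => [->|_]; last by rewrite !subn0.
by case: aAB; rewrite in_mset => ?; lia.
Qed.

Lemma mset1DB1 (K : choiceType) (x a : K) (G : {mset K}) :
  x != a \/ a \in G -> (x +` G) `\ a = x +` (G `\ a).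
Proof. by move=> h; apply: msetDB1; rewrite in_mset1 eq_sym. Qed.

Lemma boxes_Atom Pi q : boxes Pi (Atom q) = 0.
Proof. by rewrite /boxes mset_seqE; elim: Pi. Qed.

Lemma Box_neq A : Box A != A.
Proof. by apply/eqP; elim: A => // B IH [] /IH. Qed.

Lemma Atom_eq_Bot q : (Atom q == Bot) = false. Proof. by []. Qed.
Lemma Atom_eq_Imp q A B : (Atom q == Imp A B) = false. Proof. by []. Qed.
Lemma Atom_eq_Box q A : (Atom q == Box A) = false. Proof. by []. Qed.
Definition Atom_eq_connective := (Atom_eq_Bot, Atom_eq_Imp, Atom_eq_Box).

Ltac mset_eval :=
  rewrite /= ?mset1DE ?msetE2 ?msetnE ?boxes_Atom ?Atom_eq_connective /= ?addn0.

Lemma impL_box_inst_exclusive s0 s1 s :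
  impL_inst s0 s1 s -> ~ box_inst s0 s1 s.
Proof.
move=> [G [D [A [B [-> [-> ->]]]]]] [G' [D' [Pi [A' [[_ _] [[_ eD] [_ eD']]]]]]].
have := congr1 (fun M : {mset formula} => M (Box A')) eD.
by rewrite eD' /= !mset1DE msetnE eqxx (negbTE (Box_neq A')); lia.
Qed.

Lemma cut_impL_inst_exclusive s0 s1 s :
  cut_inst s0 s1 s -> ~ impL_inst s0 s1 s.
Proof.
move=> [G [D [A [_ [-> ->]]]]] [G' [D' [A' [B' [_ [[eG eD] [eG' eD']]]]]]].
have := congr1 (fun M : {mset formula} => M A') eD.
by rewrite eD' !mset1DE eqxx /=; lia.
Qed.

(* Stated for a (Box) node whose left premise and conclusion, but not its right
   premise, have been contracted. *)
Lemma cut_box_inst_exclusive s0 s0' s1 s s' :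
  cut_inst s0 s1 s -> box_inst s0' s1 s' -> s.1 = s'.1 \/ s.2 = s'.2 -> False.
Proof.
move=> [G [D [A [_ [-> ->]]]]] [G' [D' [Pi [A' [_ [[eG eD] ->]]]]]] /= [e|e].
  have := congr1 (fun M : {mset formula} => M A) eG.
  by rewrite e !mset1DE !msetE2 eqxx /=; lia.
have := congr1 (fun M : {mset formula} => M (Box A')) eD.
by rewrite e !mset1DE msetnE eqxx (negbTE (Box_neq A')); lia.
Qed.

Lemma rbp_count_rcons t q i m : rbp_count t (rcons q i) m ->
  (right_box_premise t q i /\ exists2 m', m = m'.+1 & rbp_count t q m') \/
  (~ right_box_premise t q i /\ rbp_count t q m).
Proof.
move e: (rcons q i) => r H; case: H e => [|r' i' m' H rbp|r' i' m' H rbp] e.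
- by move/(congr1 size): e; rewrite size_rcons.
- by case/rcons_inj: e => -> ->; left; split=> //; exists m'.
- by case/rcons_inj: e => -> ->; right.
Qed.

Lemma rbp_count_ext t t' :
  (forall q i, right_box_premise t q i <-> right_box_premise t' q i) ->
  forall q m, rbp_count t q m -> rbp_count t' q m.
Proof.
move=> E q m; elim=> [|r i k _ IH rbp|r i k _ IH rbp]; first exact: rbp_nil.
- by apply: rbp_yes => //; apply/E.
- by apply: rbp_no => // /E.
Qed.

Lemma frag_inner_rcons n t q i : frag_inner n t (rcons q i) -> frag_inner n t q.
Proof.
case=> m [/rbp_count_rcons [[_ [m' -> H]]|[_ H]] lt_m]; last by exists m.
by exists m'; split=> //; lia.
Qed.

Lemma frag_inner_in_frag n t q : frag_inner n t q -> in_frag n t q.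
Proof.
case/lastP: q => [|q i] F; first by left.
by right; exists q, i; split=> //; apply: frag_inner_rcons F.
Qed.

Lemma in_frag_rcons n t q i : in_frag n t (rcons q i) -> frag_inner n t q.
Proof.
case=> [/(congr1 size)|[q' [i' [/rcons_inj [-> _] //]]]].
by rewrite size_rcons.
Qed.

Definition main_node (t : ptree) (q : seq nat) : Prop := rbp_count t q 0.

Lemma main_node_rconsE t q i :
  main_node t (rcons q i) <-> main_node t q /\ ~ right_box_premise t q i.
Proof.
split=> [|[]]; last exact: rbp_no.
by case/rbp_count_rcons=> [[_ [? //]]|[]].
Qed.

Section Agreement.

Variables (n : nat) (ta tb : ptree).
Hypothesis ta_tb : forall q, in_frag n ta q -> ta q = tb q.

Lemma box_node_agree q : frag_inner n ta q -> box_node ta q <-> box_node tb q.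
Proof.
move=> F; have eq : ta q = tb q by apply/ta_tb/frag_inner_in_frag.
have eqS i : ta (rcons q i) = tb (rcons q i) by apply: ta_tb; right; exists q, i.
by rewrite /box_node eq !eqS.
Qed.

Lemma rbp_count_agree q m : rbp_count ta q m -> in_frag n ta q -> rbp_count tb q m.
Proof.
elim=> [_|r i k _ IH [-> bx]|r i k _ IH rbp] => [|/in_frag_rcons F|/in_frag_rcons F].
- exact: rbp_nil.
- by apply: rbp_yes; [apply/IH/frag_inner_in_frag | split; last apply/box_node_agree].
- apply: rbp_no; first exact/IH/frag_inner_in_frag.
  by case=> e /(box_node_agree F) bx; apply: rbp.
Qed.

Lemma main_node_agree q : main_node ta q -> in_frag n ta q -> main_node tb q.
Proof. exact: rbp_count_agree. Qed.

Lemma in_frag_agree q : in_frag n ta q -> in_frag n tb q.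
Proof.
case=> [->|[q' [i [-> [m [H lt_m]]]]]]; first by left.
have F : frag_inner n ta q' by exists m.
right; exists q', i; split=> //; exists m; split=> //.
exact: rbp_count_agree H (frag_inner_in_frag F).
Qed.

End Agreement.

Lemma node_ok_ext t t' q s : (forall i, t (rcons q i) = t' (rcons q i)) ->
  node_ok t q s -> node_ok t' q s.
Proof.
move=> e; rewrite /node_ok -!e.
case=> [[? nil]|[[s0 [? [nil ?]]]|[s0 [s1 [? [? [nil ?]]]]]]].
- by left; split=> // i; rewrite -e.
- by right; left; exists s0; split=> //; split=> // i /nil; rewrite e.
- right; right; exists s0, s1; do 2!split=> //.
  by split=> // i /nil; rewrite e.
Qed.

Section ProofNodes.

Variable t : ptree.
Hypothesis t_proof : is_proof t.

Lemma proof_node_ok q s : t q = Some s -> node_ok t q s.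
Proof. by case: t_proof => [_ [_ [ok _]]]; apply: ok. Qed.

Lemma proof_parent q i s : t (rcons q i) = Some s -> exists sq, t q = Some sq.
Proof.
case: t_proof => [_ [parent _]] Ei; case Eq: (t q) => [sq|]; first by exists sq.
by case: (parent q i); rewrite /defined ?Ei ?Eq.
Qed.

Lemma proof_child_none q s i : t q = Some s -> 1 < i -> t (rcons q i) = None.
Proof.
move=> /proof_node_ok + lt1i.
by case=> [[_ nil]|[[s0 [_ [nil _]]]|[s0 [s1 [_ [_ [nil _]]]]]]];
  apply: nil => //; lia.
Qed.

Lemma proof_binary_node q s s0 s1 :
  t q = Some s -> t (rcons q 0) = Some s0 -> t (rcons q 1) = Some s1 ->
  impL_inst s0 s1 s \/ box_inst s0 s1 s \/ cut_inst s0 s1 s.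
Proof.
move=> /proof_node_ok + E0 E1.
case=> [[_ nil]|[[s0' [_ [nil _]]]|[s0' [s1' [E0' [E1' [_ Hr]]]]]]].
- by rewrite nil in E0.
- by rewrite nil in E1.
- by move: E0 E1; rewrite E0' E1' => -[<-] [<-].
Qed.

End ProofNodes.

Section Contraction.

Variables (p : nat) (left_side : bool).

Definition mult (s : sequent) : nat := (if left_side then s.1 else s.2) (Atom p).

Definition contract (s : sequent) : sequent :=
  if left_side then (s.1 `\ Atom p, s.2) else (s.1, s.2 `\ Atom p).

Ltac unfold_side := unfold mult, contract; case: left_side; mset_eval.

Lemma mult_impR s0 s : impR_inst s0 s -> mult s <= mult s0.
Proof. by move=> [G [D [A [B [-> ->]]]]]; unfold_side; lia. Qed.

Lemma mult_refl s0 s : refl_inst s0 s -> mult s <= mult s0.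
Proof. by move=> [G [D [B [-> ->]]]]; unfold_side; lia. Qed.

Lemma mult_impL s0 s1 s : impL_inst s0 s1 s -> mult s <= mult s0 /\ mult s <= mult s1.
Proof. by move=> [G [D [A [B [-> [-> ->]]]]]]; unfold_side; lia. Qed.

Lemma mult_box s0 s1 s : box_inst s0 s1 s -> mult s <= mult s0.
Proof. by move=> [G [D [Pi [A [-> [_ ->]]]]]]; unfold_side; lia. Qed.

Lemma mult_cut s0 s1 s : cut_inst s0 s1 s -> mult s <= mult s0 /\ mult s <= mult s1.
Proof. by move=> [G [D [A [-> [-> ->]]]]]; unfold_side; lia. Qed.

Lemma proof_mult_le_child t q i s s' : is_proof t ->
  t q = Some s -> t (rcons q i) = Some s' -> ~ right_box_premise t q i ->
  mult s <= mult s'.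
Proof.
move=> t_proof Eq Ei nrbp.
case: (proof_node_ok t_proof Eq) => [[_ E]|[[s0 [E0 [E Hr]]]|[s0 [s1 [E0 [E1 [E Hr]]]]]]].
- by rewrite E in Ei.
- case: i Ei nrbp => [|i] Ei _; last by rewrite E in Ei.
  by move: Ei; rewrite E0 => -[<-]; case: Hr => [/mult_impR|/mult_refl].
case: i Ei nrbp => [|[|i]] Ei nrbp.
- move: Ei; rewrite E0 => -[<-].
  by case: Hr => [/mult_impL [-> _]|[/mult_box|/mult_cut [-> _]]].
- move: Ei; rewrite E1 => -[<-].
  case: Hr => [/mult_impL [_ ->] //|[bx|/mult_cut [_ ->] //]].
  by case: nrbp; split=> //; exists s, s0, s1.
- by rewrite E in Ei.
Qed.

Lemma contract_initial s : initial s -> 1 < mult s -> initial (contract s).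
Proof.
have keep q (X : {mset formula}) : Atom q \in X -> 1 < X (Atom p) -> Atom q \in X `\ Atom p.
  by move=> qX pX; rewrite in_msetB1 qX andbT; apply/implyP => /eqP ->.
rewrite /mult /contract => -[[q [G [D ->]]]|[G [D ->]]]; case: left_side => /= h.
- left; exists q, ((Atom q +` G) `\ Atom p `\ Atom q), D.
  by rewrite msetB1K // keep // mset1D1.
- left; exists q, G, ((Atom q +` D) `\ Atom p `\ Atom q).
  by rewrite msetB1K // keep // mset1D1.
- by right; exists (G `\ Atom p), D; rewrite mset1DB1 //; left.
- by right; exists G, (D `\ Atom p).
Qed.

Ltac mset1DB1_side := solve [by left | right; rewrite in_mset; mset_eval; lia].

Lemma contract_impR s0 s : impR_inst s0 s -> 0 < mult s ->
  impR_inst (contract s0) (contract s).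
Proof.
move=> [G [D [A [B [-> ->]]]]]; unfold_side; move=> h.
- by exists (G `\ Atom p), D, A, B; rewrite !mset1DB1 //; mset1DB1_side.
- by exists G, (D `\ Atom p), A, B; rewrite !mset1DB1 //; mset1DB1_side.
Qed.

Lemma contract_refl s0 s : refl_inst s0 s -> 0 < mult s ->
  refl_inst (contract s0) (contract s).
Proof.
move=> [G [D [B [-> ->]]]]; unfold_side; move=> h.
- by exists (G `\ Atom p), D, B; rewrite !mset1DB1 //; mset1DB1_side.
- by exists G, (D `\ Atom p), B.
Qed.

Lemma contract_impL s0 s1 s : impL_inst s0 s1 s -> 0 < mult s ->
  impL_inst (contract s0) (contract s1) (contract s).
Proof.
move=> [G [D [A [B [-> [-> ->]]]]]]; unfold_side; move=> h.
- by exists (G `\ Atom p), D, A, B; rewrite !mset1DB1 //; mset1DB1_side.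
- by exists G, (D `\ Atom p), A, B; rewrite !mset1DB1 //; mset1DB1_side.
Qed.

Lemma contract_cut s0 s1 s : cut_inst s0 s1 s -> 0 < mult s ->
  cut_inst (contract s0) (contract s1) (contract s).
Proof.
move=> [G [D [A [-> [-> ->]]]]]; unfold_side; move=> h.
- by exists (G `\ Atom p), D, A; rewrite !mset1DB1 //; mset1DB1_side.
- by exists G, (D `\ Atom p), A; rewrite !mset1DB1 //; mset1DB1_side.
Qed.

Lemma contract_box s0 s1 s : box_inst s0 s1 s -> 0 < mult s ->
  box_inst (contract s0) s1 (contract s).
Proof.
move=> [G [D [Pi [A [-> [-> ->]]]]]]; unfold_side; move=> h.
- exists (G `\ Atom p), D, Pi, A; rewrite ![_ `+` boxes Pi]msetDC.
  by rewrite !msetDB1 //; right; rewrite in_mset.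
- by exists G, (D `\ Atom p), Pi, A; rewrite !mset1DB1 //; mset1DB1_side.
Qed.

Definition contract_main (t : ptree) : ptree := fun q =>
  if excluded_middle_informative (main_node t q) then omap contract (t q) else t q.

Definition contractible (t : ptree) : Prop := exists2 s, t [::] = Some s & 1 < mult s.

Section ContractMain.

Variable t : ptree.

Lemma contract_main_on q : main_node t q -> contract_main t q = omap contract (t q).
Proof. by rewrite /contract_main; case: excluded_middle_informative. Qed.

Lemma contract_main_off q : ~ main_node t q -> contract_main t q = t q.
Proof. by rewrite /contract_main; case: excluded_middle_informative. Qed.

Lemma contract_main_None q : t q = None -> contract_main t q = None.
Proof. by rewrite /contract_main => ->; case: excluded_middle_informative. Qed.

Lemma defined_contract_main q : defined (contract_main t) q <-> defined t q.
Proof.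
rewrite /defined /contract_main.
by case: excluded_middle_informative; case: (t q).
Qed.

Lemma contract_main_step q i : main_node t q -> ~ right_box_premise t q i ->
  contract_main t (rcons q i) = omap contract (t (rcons q i)).
Proof. by move=> Mq nrbp; apply/contract_main_on/main_node_rconsE. Qed.

Lemma contract_main_rbp q i : right_box_premise t q i ->
  contract_main t (rcons q i) = t (rcons q i).
Proof. by move=> rbp; apply: contract_main_off => /main_node_rconsE []. Qed.

Lemma contract_main_off_rcons q i : ~ main_node t q ->
  contract_main t (rcons q i) = t (rcons q i).
Proof. by move=> nMq; apply: contract_main_off => /main_node_rconsE []. Qed.

Hypothesis t_proof : is_proof t.
Hypothesis t_contractible : contractible t.

(* Along the main fragment the multiplicity of [p] never decreases. *)
Lemma main_node_mult_gt1 q s : main_node t q -> t q = Some s -> 1 < mult s.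
Proof.
elim/last_ind: q s => [|q i IH] s.
  by case: t_contractible => s0 -> ? _ [<-].
case/main_node_rconsE => Mq nrbp Es.
have [sq Eq] := proof_parent t_proof Es.
exact: leq_trans (IH _ Mq Eq) (proof_mult_le_child t_proof Eq Es nrbp).
Qed.

Lemma contract_nonbox_binary q s s0 s1 : main_node t q -> ~ box_node t q ->
  t q = Some s -> t (rcons q 0) = Some s0 -> t (rcons q 1) = Some s1 ->
  impL_inst s0 s1 s /\ impL_inst (contract s0) (contract s1) (contract s) \/
  cut_inst s0 s1 s /\ cut_inst (contract s0) (contract s1) (contract s).
Proof.
move=> Mq nbx Es Es0 Es1; have pos : 0 < mult s by have := main_node_mult_gt1 Mq Es; lia.
case: (proof_binary_node t_proof Es Es0 Es1) => [impl|[bx|cut]].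
- by left; split; last exact: contract_impL.
- by case: nbx; exists s, s0, s1.
- by right; split; last exact: contract_cut.
Qed.

Lemma contract_box_node q s s0 s1 : main_node t q ->
  t q = Some s -> t (rcons q 0) = Some s0 -> t (rcons q 1) = Some s1 ->
  box_inst s0 s1 s ->
  [/\ contract_main t q = Some (contract s),
       contract_main t (rcons q 0) = Some (contract s0),
       contract_main t (rcons q 1) = Some s1 &
       box_inst (contract s0) s1 (contract s)].
Proof.
move=> Mq Es Es0 Es1 bx; have bq : box_node t q by exists s, s0, s1.
split; first by rewrite contract_main_on ?Es.
- by rewrite contract_main_step ?Es0 // => -[].
- by rewrite contract_main_rbp.
- by apply: contract_box bx _; have := main_node_mult_gt1 Mq Es; lia.
Qed.

Lemma box_node_contract_main q : box_node (contract_main t) q <-> box_node t q.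
Proof.
case: (classic (main_node t q)) => Mq; last first.
  by rewrite /box_node contract_main_off // !contract_main_off_rcons.
split=> [|[s [s0 [s1 [Es [Es0 [Es1 bx]]]]]]]; last first.
  have [E E0 E1 bx'] := contract_box_node Mq Es Es0 Es1 bx.
  by exists (contract s), (contract s0), s1.
case: (classic (box_node t q)) => // nbx [x [x0 [x1 [E [E0 [E1 bx']]]]]].
have nrbp i : ~ right_box_premise t q i by case.
move: E E0 E1 bx'; rewrite contract_main_on // !contract_main_step //.
case Es: (t q) => [s|] // [<-]; case Es0: (t (rcons q 0)) => [s0|] // [<-].
case Es1: (t (rcons q 1)) => [s1|] // [<-] bx'.
case: (contract_nonbox_binary Mq nbx Es Es0 Es1) => [[_ impl]|[_ cut]].
- by case: (impL_box_inst_exclusive impl bx').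
- by case: (cut_box_inst_exclusive cut bx'); left.
Qed.

Lemma rbp_contract_main q i :
  right_box_premise (contract_main t) q i <-> right_box_premise t q i.
Proof. by rewrite /right_box_premise box_node_contract_main. Qed.

Lemma rbp_count_contract_main q m : rbp_count (contract_main t) q m <-> rbp_count t q m.
Proof.
by split; apply: rbp_count_ext => q' i; rewrite rbp_contract_main.
Qed.

Lemma frag_inner_contract_main n q : frag_inner n (contract_main t) q <-> frag_inner n t q.
Proof. by split=> -[m [H lt_m]]; exists m; split=> //; apply/rbp_count_contract_main. Qed.

Lemma in_frag_contract_main n q : in_frag n (contract_main t) q <-> in_frag n t q.
Proof.
rewrite /in_frag; split=> -[->|[q' [i [-> F]]]]; (try by left); right;
  by exists q', i; split=> //; apply/frag_inner_contract_main.
Qed.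

Lemma cut_node_contract_main q : cut_node (contract_main t) q -> cut_node t q.
Proof.
case: (classic (main_node t q)) => Mq; last first.
  by rewrite /cut_node contract_main_off // !contract_main_off_rcons.
case: (classic (box_node t q)) => [bx|nbx] [x [x0 [x1 [E [E0 [E1 cut]]]]]].
  have [s [s0 [s1 [Es [Es0 [Es1 bxi]]]]]] := bx.
  have [E' E0' E1' _] := contract_box_node Mq Es Es0 Es1 bxi.
  move: E E0 E1 cut; rewrite E' E0' E1' => -[<-] [<-] [<-] cut.
  by case: (cut_box_inst_exclusive cut bxi); rewrite /contract; case: left_side; [right|left].
have nrbp i : ~ right_box_premise t q i by case.
move: E E0 E1 cut; rewrite contract_main_on // !contract_main_step //.
case Es: (t q) => [s|] // [<-]; case Es0: (t (rcons q 0)) => [s0|] // [<-].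
case Es1: (t (rcons q 1)) => [s1|] // [<-] cut.
case: (contract_nonbox_binary Mq nbx Es Es0 Es1) => [[_ impl]|[cuti _]].
- by case: (cut_impL_inst_exclusive cut impl).
- by exists s, s0, s1.
Qed.

Lemma node_ok_contract_main q x : contract_main t q = Some x -> node_ok (contract_main t) q x.
Proof.
case: (classic (main_node t q)) => Mq; last first.
  rewrite contract_main_off // => /(proof_node_ok t_proof).
  by apply: node_ok_ext => i; rewrite contract_main_off_rcons.
rewrite contract_main_on //; case Es: (t q) => [s|] // [<-].
have pos := main_node_mult_gt1 Mq Es.
have none i : 1 < i -> contract_main t (rcons q i) = None.
  by move=> /(proof_child_none t_proof Es) /contract_main_None.
case: (classic (box_node t q)) => [bx|nbx].
  have [s' [s0 [s1 [Es' [Es0 [Es1 bxi]]]]]] := bx; move: Es' bxi; rewrite Es => -[<-] bxi.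
  have [_ E0 E1 bx'] := contract_box_node Mq Es Es0 Es1 bxi.
  by right; right; exists (contract s0), s1; do 3!split=> //; right; left.
have step i : contract_main t (rcons q i) = omap contract (t (rcons q i)).
  by apply: contract_main_step => // -[].
case: (proof_node_ok t_proof Es) =>
  [[init nil]|[[s0 [Es0 [nil r]]]|[s0 [s1 [Es0 [Es1 [nil r]]]]]]].
- by left; split; [exact: contract_initial | move=> i; rewrite step nil].
- right; left; exists (contract s0); rewrite step Es0; split=> //.
  split; first by move=> i /nil; rewrite step => ->.
  by case: r => [/contract_impR|/contract_refl] h; [left|right]; apply: h; lia.
- right; right; exists (contract s0), (contract s1); rewrite !step Es0 Es1.
  do 2!split=> //; split=> //.
  by case: (contract_nonbox_binary Mq nbx Es Es0 Es1) => [[_ ?]|[_ ?]]; [left|right; right].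
Qed.

Lemma contract_main_proof : is_proof (contract_main t).
Proof.
case: t_proof => [def_root [parent [_ inf]]].
split; first exact/defined_contract_main.
split; first by move=> q i /defined_contract_main /parent /defined_contract_main.
split; first exact: node_ok_contract_main.
move=> b b_inf N; have [|k [le_Nk rbp]] := inf b _ N.
  by move=> k; apply/defined_contract_main/b_inf.
by exists k; split=> //; apply/rbp_contract_main.
Qed.

End ContractMain.

Lemma contract_main_agree n t1 t2 :
  (forall q, in_frag n t1 q -> t1 q = t2 q) ->
  (forall q, in_frag n t2 q -> t2 q = t1 q) ->
  forall q, in_frag n t1 q -> contract_main t1 q = contract_main t2 q.
Proof.
move=> t12 t21 q F1; have F2 := in_frag_agree t12 F1.
have M12 : main_node t1 q <-> main_node t2 q.
  by split=> M; [exact: (main_node_agree t12 M F1) | exact: (main_node_agree t21 M F2)].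
case: (classic (main_node t1 q)) => M1.
  by rewrite !contract_main_on -?M12 // t12.
by rewrite !contract_main_off -?M12 // t12.
Qed.

Definition contract_proof (pi : proof) : proof :=
  match excluded_middle_informative (contractible (ptree_of pi)) with
  | left c => Proof (contract_main_proof (proofP pi) c)
  | right _ => pi
  end.

Lemma contract_proof_sim n pi pi' : sim n pi pi' -> sim n (contract_proof pi) (contract_proof pi').
Proof.
case=> [->|[t12 t21]]; [by left | right].
have t21' q : in_frag n (ptree_of pi') q -> ptree_of pi' q = ptree_of pi q.
  by move=> /t21 ->.
have root_eq : ptree_of pi [::] = ptree_of pi' [::] by apply: t12; left.
have cc : contractible (ptree_of pi) <-> contractible (ptree_of pi').
  by rewrite /contractible root_eq.
rewrite /contract_proof; case: excluded_middle_informative => c;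
  case: excluded_middle_informative => c' /=; [split=> q | by case: c'; apply/cc |
  by case: c; apply/cc | by split].
- by move/(in_frag_contract_main (proofP pi) c); apply: contract_main_agree.
- move/(in_frag_contract_main (proofP pi') c')/(in_frag_agree t21').
  by apply: contract_main_agree.
Qed.

Lemma contract_proof_cut_free n pi : P_ n pi -> P_ n (contract_proof pi).
Proof.
rewrite /contract_proof; case: excluded_middle_informative => c //= cut_free q.
move=> /(frag_inner_contract_main (proofP pi) c) F.
by move/(cut_node_contract_main (proofP pi) c); apply: cut_free F.
Qed.

Lemma contract_proof_height : height_nonincr contract_proof.
Proof.
move=> pi h le_h; rewrite /contract_proof; case: excluded_middle_informative => c //= q.
move=> /defined_contract_main D /(in_frag_contract_main (proofP pi) c).
exact: le_h D.
Qed.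

Lemma contract_proof_root pi s : Defs.root pi = Some s -> 1 < mult s ->
  Defs.root (contract_proof pi) = Some (contract s).
Proof.
rewrite /Defs.root /contract_proof => Es pos.
case: excluded_middle_informative => [c|[]] /=; last by exists s.
by rewrite contract_main_on ?Es //; apply: rbp_nil.
Qed.

Lemma strongly_admissible_contraction (R : rule1) :
  (forall prem concl, R prem concl -> 1 < mult prem /\ concl = contract prem) ->
  strongly_admissible R.
Proof.
move=> R_contract; exists contract_proof; split; first exact: contract_proof_sim.
split; first exact: contract_proof_cut_free.
split; first exact: contract_proof_height.
move=> prem concl /R_contract [pos ->] pi root_pi.
exact: contract_proof_root.
Qed.

End Contraction.

Theorem lemma5p3 :
  forall p : nat, strongly_admissible (acl p) /\ strongly_admissible (acr p).
Proof.
move=> p; split; [apply: (@strongly_admissible_contraction p true) |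
                  apply: (@strongly_admissible_contraction p false)];
  by move=> _ _ [G [D [-> ->]]]; rewrite /mult /contract /= msetD1K !mset1DE eqxx.
Qed.
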